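(* Let $G$ be a simple complex Lie group with Lie algebra $\mathfrak g$, $\rho\colon G\to\mathrm{GL}(V)$ a faithful irreducible finite-dimensional complex representation with differential $\rho_*$, $T$ a maximal torus of $G$ with Lie algebra $\mathfrak t$. Suppose $g\in T$ and $x\in\mathfrak t$ satisfy $\rho(g)=\rho_*(x)$ in $\mathrm{End}(V)$. Let $e_1,\dots,e_n$ be a basis of $V$ of $T$-weight vectors with characters $\chi_1,\dots,\chi_n\in X^*(T)$. If $\chi_i\chi_j=\chi_k\chi_l$ for four of these characters, then, as polynomials in $z$, $$(z-\chi_i(g))(z-\chi_j(g))=(z-\chi_k(g))(z-\chi_l(g)).$$
   Context: Each character $\chi\in X^*(T)$ is identified with the linear form $t^*\in\mathfrak t^*$ satisfying $\chi(\exp(y))=\exp(t^*(y))$ for all $y\in\mathfrak t$. *)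

(* Complex numbers are modelled as R[i] for R : realType
   (mathcomp-real-closed 'complex'); R[i] is the field C when R = reals. *)
From HB Require Import structures.
From mathcomp Require Import all_boot all_order all_algebra.
From mathcomp Require Import complex reals.
Set Implicit Arguments. Unset Strict Implicit. Unset Printing Implicit Defensive.
Import Order.TTheory GRing.Theory Num.Theory.
Local Open Scope ring_scope.

(* Maximal torus T of rank r, realised as (C^x)^r; its Lie algebra t = C^r.
   An element of T is a vector t : 'I_r -> C with all coordinates nonzero. *)
Definition in_torus (C : fieldType) (r : nat) (t : 'I_r -> C) : Prop :=
  forall a, t a != 0.

(* A character of T, i.e. an element of X^*(T) = Z^r, evaluated at t in T:
   chi_mu(t) = prod_a t_a^(mu_a). *)
Definition chi (C : fieldType) (r : nat) (mu : 'I_r -> int) (t : 'I_r -> C) : C :=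
  \prod_(a < r) t a ^ (mu a).

(* The linear form on t identified with chi_mu (chi_mu(exp y) = exp(dchi_mu y)). *)
Definition dchi (C : fieldType) (r : nat) (mu : 'I_r -> int) (y : 'I_r -> C) : C :=
  \sum_(a < r) (mu a)%:~R * y a.

(* Restriction to T of the representation rho on V = C^n, with weight basis
   given by the columns of the invertible matrix B, of weights mu_1..mu_n. *)
Definition rhoT (C : fieldType) (r n : nat) (B : 'M[C]_n) (mu : 'I_n -> 'I_r -> int)
  (t : 'I_r -> C) : 'M[C]_n :=
  B *m diag_mx (\row_(m < n) chi (mu m) t) *m invmx B.

Definition drhoT (C : fieldType) (r n : nat) (B : 'M[C]_n) (mu : 'I_n -> 'I_r -> int)
  (x : 'I_r -> C) : 'M[C]_n :=
  B *m diag_mx (\row_(m < n) dchi (mu m) x) *m invmx B.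

From HB Require Import structures.
From mathcomp Require Import all_boot all_order all_algebra.
From mathcomp Require Import complex reals.
From mathcomp Require Import ring.
Import Order.TTheory GRing.Theory Num.Theory.
Local Open Scope ring_scope.
Local Open Scope complex_scope.

(* Conjugating by the weight basis B, [rho(g) = rho_*(x)] says that every
   eigenvalue [chi_m(g)] equals [dchi_m(x)].  The identity [chi_i chi_j = chi_k chi_l]
   on all of T forces [mu_i + mu_j = mu_k + mu_l] (test it on the one-parameter
   subgroups of T at the point 2, which is not a root of unity), and [dchi] is
   linear in the weight, so the two pairs of eigenvalues have the same sum; they
   have the same product by the identity at g.  A monic quadratic is determined
   by the sum and the product of its roots. *)

Lemma conj_diag_mx_inj {R : comUnitRingType} {n : nat} {B : 'M[R]_n} {d e : 'rV[R]_n} :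
  B \in unitmx ->
  B *m diag_mx d *m invmx B = B *m diag_mx e *m invmx B -> d = e.
Proof.
move=> uB /(congr1 (fun M => invmx B *m M *m B)).
rewrite !mulmxA !mulVmx // !mul1mx !mulmxKV // => de.
by apply/rowP => m; have /matrixP/(_ m m) := de; rewrite !mxE eqxx !mulr1n.
Qed.

Lemma pexprz_inj (R : numFieldType) (c : R) :
  0 < c -> c != 1 -> injective (fun m : int => c ^ m).
Proof.
move=> c_gt0 c_neq1 m n /= cmn; apply/eqP; rewrite -subr_eq0.
have c_neq0 : c != 0 by rewrite gt_eqF.
have : c ^ (m - n) == 1 by rewrite expfzDr // -invr_expz cmn mulfV // expfz_neq0.
by rewrite pexprz_eq1 ?ltW // (negPf c_neq1) orbF.
Qed.

Definition coord_cochar {C : fieldType} {r : nat} (a : 'I_r) (c : C) : 'I_r -> C :=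
  fun b => if b == a then c else 1.

Lemma in_torus_coord_cochar {C : fieldType} {r : nat} (a : 'I_r) (c : C) :
  c != 0 -> in_torus (coord_cochar a c).
Proof. by move=> c_neq0 b; rewrite /coord_cochar; case: ifP; rewrite ?oner_neq0. Qed.

Lemma chi_coord_cochar (C : fieldType) (r : nat) (mu : 'I_r -> int) (a : 'I_r) (c : C) :
  chi mu (coord_cochar a c) = c ^ mu a.
Proof.
rewrite /chi (bigD1 a) //= /coord_cochar eqxx big1 ?mulr1 // => b /negPf ->.
exact: exp1rz.
Qed.

Lemma weight_add_eq {C : numFieldType} {r : nat} {mu1 mu2 mu3 mu4 : 'I_r -> int} :
  (forall t : 'I_r -> C, in_torus t -> chi mu1 t * chi mu2 t = chi mu3 t * chi mu4 t) ->
  forall a, mu1 a + mu2 a = mu3 a + mu4 a.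
Proof.
move=> chi_eq a; have two_neq0 : (2 : C) != 0 by rewrite pnatr_eq0.
apply: (@pexprz_inj C 2); rewrite ?ltr0n ?pnatr_eq1 //=.
have := chi_eq _ (in_torus_coord_cochar a _ two_neq0).
by rewrite !chi_coord_cochar -!expfzDr.
Qed.

Lemma dchi_add_eq (C : fieldType) (r : nat) (mu1 mu2 mu3 mu4 : 'I_r -> int) (y : 'I_r -> C) :
  (forall a, mu1 a + mu2 a = mu3 a + mu4 a) ->
  dchi mu1 y + dchi mu2 y = dchi mu3 y + dchi mu4 y.
Proof.
move=> mu_eq; rewrite /dchi -!big_split; apply: eq_bigr => a _ /=.
by rewrite -!mulrDl -!intrD mu_eq.
Qed.

Lemma mulXsubC_pair_eq (R : comNzRingType) (a b c d : R) :
  a + b = c + d -> a * b = c * d ->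
  ('X - a%:P) * ('X - b%:P) = ('X - c%:P) * ('X - d%:P) :> {poly R}.
Proof.
have vieta (u v : R) : ('X - u%:P) * ('X - v%:P) = 'X ^+ 2 - (u + v)%:P * 'X + (u * v)%:P.
  by rewrite polyCD polyCM; ring.
by move=> sum_eq prod_eq; rewrite !vieta sum_eq prod_eq.
Qed.

Theorem lemma3 (R : realType) (r n : nat) (B : 'M[R[i]]_n)
  (mu : 'I_n -> 'I_r -> int) (g x : 'I_r -> R[i]) (i j k l : 'I_n) :
  B \in unitmx ->
  in_torus g ->
  rhoT B mu g = drhoT B mu x ->
  (forall t : 'I_r -> R[i], in_torus t ->
     chi (mu i) t * chi (mu j) t = chi (mu k) t * chi (mu l) t) ->
  ('X - (chi (mu i) g)%:P) * ('X - (chi (mu j) g)%:P)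
  = ('X - (chi (mu k) g)%:P) * ('X - (chi (mu l) g)%:P) :> {poly R[i]}.
Proof.
move=> uB tg rho_eq chi_eq.
have eigen m : chi (mu m) g = dchi (mu m) x.
  by have /rowP/(_ m) := conj_diag_mx_inj uB rho_eq; rewrite !mxE.
have mu_add := weight_add_eq chi_eq.
apply: mulXsubC_pair_eq; last exact: chi_eq g tg.
by rewrite !eigen; apply: dchi_add_eq; exact: mu_add.
Qed.
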